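(* Let $a_{n,0}$ denote the number of matchings of size $n$ with no occurrence of the endhered pattern $21$. For any $n\ge0$, $$a_{n+1,0}=\sum_{k=0}^{n}(-1)^{n-k}\binom{n}{k}(2k+1)!!,$$ where $m!!$ is the double factorial ($m(m-2)(m-4)\cdots$ down to $2$ or $1$).
   Context: A matching of size $n$ is a set of $n$ arcs $(a,b)$ with $1\le a<b\le 2n$ such that each point of $\{1,\dots,2n\}$ belongs to exactly one arc. An occurrence of the endhered pattern $21$ in a matching $\mu$ is a pair of arcs of $\mu$ of the form $(i+1,j+2),(i+2,j+1)$ (two nested arcs with consecutive starting points and consecutive ending points). *)

From mathcomp Require Import all_boot all_order all_algebra.
Set Implicit Arguments. Unset Strict Implicit. Unset Printing Implicit Defensive.

(* Points {1,...,2n} are represented 0-indexed by 'I_(2n); an arc (a,b)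
   is a pair of points.  A matching of size n is a set of arcs with a < b
   such that every point belongs to exactly one arc. *)
Definition arc n := ('I_(2 * n) * 'I_(2 * n))%type.

Definition is_matching n (M : {set arc n}) : bool :=
  [forall e in M, (val e.1 < val e.2)%N] &&
  [forall k : 'I_(2 * n), #|[set e in M | (e.1 == k) || (e.2 == k)]| == 1%N].

(* Occurrence of the endhered pattern 21: two arcs (i+1, j+2), (i+2, j+1). *)
Definition has_endhered21 n (M : {set arc n}) : bool :=
  [exists x in M, exists y in M,
     (val y.1 == (val x.1).+1) && (val x.2 == (val y.2).+1)].

Definition a0 n : nat :=
  #|[set M : {set arc n} | is_matching M && ~~ has_endhered21 M]|.

Fixpoint dfact (m : nat) : nat :=
  match m with
  | 0 => 1
  | 1 => 1
  | (k.+2) as m' => m' * dfact k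
  end.

From Pilot Require Import Defs.
From mathcomp Require Import all_boot all_order all_algebra.
From mathcomp Require Import zify ring.
Set Implicit Arguments. Unset Strict Implicit. Unset Printing Implicit Defensive.

(* A matching on 2n points is encoded as a fixed-point-free involution of
   'I_(2n).  Let P(m, t) be the set of such involutions on m points with
   exactly t occurrences of 21.  Next to an opener a, with partner b, insert
   the parallel arc (a+1, b+1): the two arcs form a new occurrence of 21 and
   the other occurrences survive, so their number grows by exactly one; removing
   the inner arc of a marked occurrence undoes this.  Counting marked pairs
   on both sides, with m/2 openers per involution, gives
   (t+1) |P(m+2, t+1)| = (m/2) |P(m, t)|, hence
   |P(2N+2, t)| = C(N, t) a_{N+1-t,0}.  Summing over t, the total
   (2N+1)!! of all matchings on 2N+2 points is \sum_j C(N, j) a_{j+1,0},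
   and binomial inversion yields the formula. *)

Lemma card_in_bij (T U : finType) (A : {set T}) (B : {set U}) (f : T -> U) (g : U -> T) :
  {in A, forall x, f x \in B} -> {in B, forall y, g y \in A} ->
  {in A, cancel f g} -> {in B, cancel g f} -> #|A| = #|B|.
Proof.
move=> fAB gBA fK gK; rewrite -(card_in_imset (can_in_inj fK)).
suff -> : f @: A = B by [].
apply/setP => y; apply/imsetP/idP => [[x xA ->]|yB]; first exact: fAB.
by exists (g y); rewrite ?gK ?gBA.
Qed.

Lemma card_set_pairs (T U : finType) (P : pred T) (Q : T -> pred U) :
  #|[set p : T * U | P p.1 && Q p.1 p.2]| = \sum_(x | P x) #|[set y | Q x y]|.
Proof.
rewrite -sum1_card (eq_bigl (fun p : T * U => P p.1 && Q p.1 p.2)) => [|p]; last by rewrite inE.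
rewrite -(pair_big_dep P Q (fun _ _ => 1)); apply: eq_bigr => x _.
by rewrite -sum1_card; apply: eq_bigl => y; rewrite inE.
Qed.

Lemma card_set_ord k (b : pred nat) : #|[set i : 'I_k | b i]| = \sum_(i < k) b i.
Proof. by rewrite -sum1_card big_mkcond; apply: eq_bigr => i _; rewrite inE; case: (b i). Qed.

(* For u < v, [bump2 u v] enumerates nat minus {u, v} increasingly. *)
Definition bump2 u v x := bump u (bump v.-1 x).
Definition unbump2 u v y := unbump v.-1 (unbump u y).

Ltac bump2_arith := unfold bump2, unbump2, bump, unbump; lia.

Section Bump2.
Variables u v : nat.
Hypothesis ltuv : u < v.

Lemma bump2_neq_l x : bump2 u v x != u. Proof. bump2_arith. Qed.
Lemma bump2_neq_r x : bump2 u v x != v. Proof. bump2_arith. Qed.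
Lemma bump2_small x : x < u -> bump2 u v x = x. Proof. bump2_arith. Qed.
Lemma bump2K : cancel (bump2 u v) (unbump2 u v). Proof. move=> x; bump2_arith. Qed.
Lemma unbump2K y : y != u -> y != v -> bump2 u v (unbump2 u v y) = y.
Proof. bump2_arith. Qed.
Lemma bump2_inj : injective (bump2 u v). Proof. exact: can_inj bump2K. Qed.
Lemma ltn_bump2 x y : (bump2 u v x < bump2 u v y) = (x < y). Proof. bump2_arith. Qed.
Lemma ltn_bump2_bound m x : v < m.+2 -> (bump2 u v x < m.+2) = (x < m).
Proof. bump2_arith. Qed.
Lemma unbump2_bound m y : v < m.+2 -> y < m.+2 -> y != u -> y != v -> unbump2 u v y < m.
Proof. bump2_arith. Qed.
Lemma bump2S x : x.+1 != u -> x.+2 != v -> bump2 u v x.+1 = (bump2 u v x).+1.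
Proof. bump2_arith. Qed.
Lemma bump2_eqS y z :
  (bump2 u v z == (bump2 u v y).+1) = [&& z == y.+1, y.+1 != u & y.+2 != v].
Proof. bump2_arith. Qed.

Lemma sum_bump2 m (phi : nat -> nat) : v < m.+2 ->
  \sum_(i < m.+2) phi i = phi u + phi v + \sum_(x < m) phi (bump2 u v x).
Proof.
move=> ltvm; have ltum : u < m.+2 by lia.
have ltvm' : v.-1 < m.+1 by lia.
rewrite (bigD1_ord (Ordinal ltum)) //= (bigD1_ord (Ordinal ltvm')) //= addnA.
by congr (_ + phi _ + _); rewrite /bump; lia.
Qed.

End Bump2.

Definition fpf_involution m (F : nat -> nat) :=
  forall x, x < m -> [/\ F x < m, F (F x) = x & F x != x].

(* [insert_arc u v G] adds the arc (u, v) to G, relabelling the old points by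
   [bump2 u v]; [remove_arc u F] deletes the arc at u and relabels back. *)
Definition insert_arc u v (G : nat -> nat) y :=
  if y == u then v else if y == v then u else bump2 u v (G (unbump2 u v y)).
Definition remove_arc u (F : nat -> nat) x := unbump2 u (F u) (F (bump2 u (F u) x)).

Lemma eq_fpf_involution m F G :
  (forall x, x < m -> F x = G x) -> fpf_involution m F -> fpf_involution m G.
Proof. by move=> eFG hF x ltxm; have [? ? ?] := hF x ltxm; rewrite -!eFG. Qed.

Lemma fpf_involution_eq m G x y : fpf_involution m G -> x < m -> y < m ->
  (G x == y) = (x == G y).
Proof.
move=> hG ltxm ltym; have [_ GGx _] := hG x ltxm; have [_ GGy _] := hG y ltym.
by apply/eqP/eqP => [<-|->].
Qed.

Lemma insert_arc_l u v G : insert_arc u v G u = v.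
Proof. by rewrite /insert_arc eqxx. Qed.

Lemma insert_arc_r u v G : u < v -> insert_arc u v G v = u.
Proof. by move=> ltuv; rewrite /insert_arc eqxx gtn_eqF. Qed.

Lemma insert_arc_bump2 u v G x : u < v -> insert_arc u v G (bump2 u v x) = bump2 u v (G x).
Proof.
by move=> ltuv; rewrite /insert_arc (negbTE (bump2_neq_l _ _)) ?(negbTE (bump2_neq_r _ _)) ?bump2K.
Qed.

Lemma insert_arcK u v G x : u < v -> remove_arc u (insert_arc u v G) x = G x.
Proof. by move=> ltuv; rewrite /remove_arc insert_arc_l insert_arc_bump2 // bump2K. Qed.

Section InsertRemove.
Variable m : nat.

Lemma insert_arc_fpf u v G : u < v -> v < m.+2 ->
  fpf_involution m G -> fpf_involution m.+2 (insert_arc u v G).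
Proof.
move=> ltuv ltvm hG y ltym.
have [->|neyu] := eqVneq y u; first by rewrite insert_arc_l (insert_arc_r _ ltuv); split; lia.
have [->|neyv] := eqVneq y v; first by rewrite (insert_arc_r _ ltuv) insert_arc_l; split; lia.
rewrite -(unbump2K ltuv neyu neyv) !insert_arc_bump2 //.
have [ltGm GGx neGx] := hG _ (unbump2_bound ltuv ltvm ltym neyu neyv).
by rewrite ltn_bump2_bound // GGx (inj_eq (bump2_inj ltuv)).
Qed.

Lemma insert_arc_eq u v G1 G2 y : u < v -> v < m.+2 ->
  (forall x, x < m -> G1 x = G2 x) -> y < m.+2 -> insert_arc u v G1 y = insert_arc u v G2 y.
Proof.
move=> ltuv ltvm eG ltym; rewrite /insert_arc.
by case: eqP => // /eqP neyu; case: eqP => // /eqP neyv; rewrite eG // unbump2_bound.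
Qed.

Lemma remove_arc_eq u F1 F2 x : u < m.+2 -> u < F1 u -> F1 u < m.+2 ->
  (forall y, y < m.+2 -> F1 y = F2 y) -> x < m -> remove_arc u F1 x = remove_arc u F2 x.
Proof.
move=> ltum ltuF ltFm eF ltxm.
by rewrite /remove_arc -eF // -eF // ltn_bump2_bound.
Qed.

Section Remove.
Variables (u : nat) (F : nat -> nat).
Hypotheses (ltum : u < m.+2) (ltuF : u < F u) (hF : fpf_involution m.+2 F).

Let v := F u.
Let ltvm : v < m.+2. Proof. by have [] := hF ltum. Qed.
Let FFu : F v = u. Proof. by have [] := hF ltum. Qed.

Let F_bump2 x : x < m ->
  [/\ bump2 u v x < m.+2, F (bump2 u v x) != u & F (bump2 u v x) != v].
Proof.
move=> ltxm; have ltbm : bump2 u v x < m.+2 by rewrite ltn_bump2_bound.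
have [_ FFx _] := hF ltbm.
split=> //; apply/eqP => eFx; move: FFx; rewrite eFx ?FFu => exFx.
- by move: (bump2_neq_r ltuF x); rewrite -exFx eqxx.
- by move: (bump2_neq_l ltuF x); rewrite -exFx eqxx.
Qed.

Lemma remove_arc_fpf : fpf_involution m (remove_arc u F).
Proof.
move=> x ltxm; have [ltbm neFu neFv] := F_bump2 ltxm.
have [ltFm FFx neFx] := hF ltbm.
rewrite /remove_arc -/v (unbump2K ltuF) // FFx (bump2K ltuF); split=> //.
- exact: unbump2_bound.
- apply: contraNneq neFx => ex.
  by rewrite -{2}ex (unbump2K ltuF).
Qed.

Lemma remove_arcK y : y < m.+2 -> insert_arc u v (remove_arc u F) y = F y.
Proof.
move=> ltym.
have [->|neyu] := eqVneq y u; first by rewrite insert_arc_l.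
have [->|neyv] := eqVneq y v; first by rewrite (insert_arc_r _ ltuF).
rewrite -(unbump2K ltuF neyu neyv) (insert_arc_bump2 _ _ ltuF).
have [_ neFu neFv] := F_bump2 (unbump2_bound ltuF ltvm ltym neyu neyv).
by rewrite /remove_arc -/v (unbump2K ltuF).
Qed.

End Remove.
End InsertRemove.

(* The arcs starting at i and i.+1 form the pattern 21 (points are 0-based). *)
Definition occ21 m F i := [&& i.+1 < m, i.+1 < F i.+1 & F i == (F i.+1).+1].
Definition nocc21 m F := \sum_(i < m) occ21 m F i.

Lemma eq_occ21 m F G i : (forall x, x < m -> F x = G x) -> occ21 m F i = occ21 m G i.
Proof. by move=> eFG; rewrite /occ21; case: ltnP => //= ltim; rewrite !eFG //; lia. Qed.

Lemma eq_nocc21 m F G : (forall x, x < m -> F x = G x) -> nocc21 m F = nocc21 m G.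
Proof. by move=> eFG; apply: eq_bigr => i _; rewrite (eq_occ21 _ eFG). Qed.

Section InsertParallel.
Variables (m : nat) (G : nat -> nat) (a : nat).
Hypotheses (hG : fpf_involution m G) (ltam : a < m) (ltaG : a < G a).

Let b := G a.
Let u := a.+1.
Let v := b.+1.
Let H := insert_arc u v G.
Let ltuv : u < v. Proof. by rewrite /u /v. Qed.
Let ltbm : b < m. Proof. by have [] := hG ltam. Qed.
Let ltvm : v < m.+2. Proof. by rewrite /v ltnS ltnW. Qed.
Let Gb : G b = a. Proof. by have [] := hG ltam. Qed.
Let Hu : H u = v. Proof. exact: insert_arc_l. Qed.
Let Hv : H v = u. Proof. exact: insert_arc_r G ltuv. Qed.
Let H_bump2 x : H (bump2 u v x) = bump2 u v (G x). Proof. exact: insert_arc_bump2 G x ltuv. Qed.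

Lemma occ21_insert_parallel : occ21 m.+2 H a.
Proof.
rewrite /occ21 -/u Hu -{1}(bump2_small ltuv (_ : a < u)) // H_bump2 -/b.
suff -> : bump2 u v b = v.+1 by rewrite /u /v; lia.
bump2_arith.
Qed.

Lemma occ21_insert_closer : occ21 m.+2 H v = false.
Proof. rewrite /occ21 Hv /u; lia. Qed.

Lemma occ21_insert_opener : occ21 m.+2 H u = occ21 m G a.
Proof.
rewrite /occ21 Hu -/u -/b.
have [ebu|nebu] := eqVneq b u.
  have euv : u.+1 = v by rewrite /v ebu.
  by rewrite euv Hv -[in G u]ebu Gb /v ebu /u; lia.
rewrite (_ : u.+1 = bump2 u v u) ?H_bump2; last bump2_arith.
bump2_arith.
Qed.

Lemma occ21_insert_bump2 x : x < m -> x != a -> occ21 m.+2 H (bump2 u v x) = occ21 m G x.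
Proof.
move=> ltxm nexa.
have [exb|nexb] := eqVneq x.+2 v.
  rewrite /occ21 (_ : (bump2 u v x).+1 = v) ?Hv; last bump2_arith.
  by rewrite (_ : x.+1 = b) ?Gb /u; lia.
have nex1u : x.+1 != u by rewrite /u eqSS.
rewrite /occ21 -(bump2S ltuv) // !H_bump2 !(ltn_bump2_bound ltuv) // (ltn_bump2 ltuv).
rewrite (bump2_eqS ltuv).
case ltx1m: (x.+1 < m) => //=.
have e1 := fpf_involution_eq hG ltx1m ltam.
have e2 := fpf_involution_eq hG ltxm ltbm.
rewrite -/b Gb in e1 e2; rewrite /u /v; lia.
Qed.

Lemma nocc21_insert_parallel : nocc21 m.+2 H = (nocc21 m G).+1.
Proof.
rewrite /nocc21 (sum_bump2 ltuv (fun i => occ21 m.+2 H i : nat) ltvm).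
rewrite occ21_insert_closer occ21_insert_opener addn0.
rewrite (bigD1 (Ordinal ltam)) //= [in RHS](bigD1 (Ordinal ltam)) //=.
rewrite bump2_small ?occ21_insert_parallel //.
rewrite (eq_bigr (fun i : 'I_m => occ21 m G i : nat)); first lia.
by move=> i nei; rewrite occ21_insert_bump2.
Qed.

End InsertParallel.

(* Finite functions are handled through their extension by the identity to
   nat, on which the arc surgery above is defined. *)
Definition natf m (f : {ffun 'I_m -> 'I_m}) x : nat :=
  if (insub x : option 'I_m) is Some i then val (f i) else x.

Definition ffun_of m (F : nat -> nat) : {ffun 'I_m -> 'I_m} := [ffun i : 'I_m => insubd i (F i)].

Definition is_fpf_inv m (f : {ffun 'I_m -> 'I_m}) : bool :=
  [forall i, (f (f i) == i) && (f i != i)].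

Section NatFun.
Variable m : nat.
Implicit Types (f g : {ffun 'I_m -> 'I_m}) (F : nat -> nat).

Lemma natfE f (i : 'I_m) : natf f i = f i.
Proof. by rewrite /natf valK. Qed.

Lemma natf_out f x : m <= x -> natf f x = x.
Proof. by move=> lemx; rewrite /natf insubN // -leqNgt. Qed.

Lemma natf_lt f x : x < m -> natf f x < m.
Proof. by move=> ltxm; rewrite -[x]/(val (Ordinal ltxm)) natfE. Qed.

Lemma natf_inj f g : (forall x, x < m -> natf f x = natf g x) -> f = g.
Proof.
by move=> efg; apply/ffunP => i; apply/val_inj; have := efg i (ltn_ord i); rewrite !natfE.
Qed.

Lemma is_fpf_invP f : reflect (fpf_involution m (natf f)) (is_fpf_inv f).
Proof.
apply: (iffP forallP) => [hf x ltxm | hf i].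
  have /andP[/eqP ffi nefi] := hf (Ordinal ltxm).
  by rewrite -[x]/(val (Ordinal ltxm)) !natfE ffi ltn_ord.
have [_ ffi nefi] := hf i (ltn_ord i); rewrite !natfE in ffi nefi.
by rewrite -[f (f i) == i](inj_eq val_inj) -[f i == i](inj_eq val_inj) /= ffi eqxx nefi.
Qed.

Lemma natf_ffun_of F x : fpf_involution m F -> x < m -> natf (ffun_of m F) x = F x.
Proof.
move=> hF ltxm; have [ltFm _ _] := hF x ltxm.
by rewrite -[x]/(val (Ordinal ltxm)) natfE ffunE insubdK.
Qed.

Lemma is_fpf_inv_ffun_of F : fpf_involution m F -> is_fpf_inv (ffun_of m F).
Proof.
move=> hF; apply/is_fpf_invP; apply: (eq_fpf_involution _ hF) => x ltxm.
by rewrite natf_ffun_of.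
Qed.

End NatFun.

Definition insert_arcf m u v (g : {ffun 'I_m -> 'I_m}) : {ffun 'I_m.+2 -> 'I_m.+2} :=
  ffun_of m.+2 (insert_arc u v (natf g)).
Definition remove_arcf m u (f : {ffun 'I_m.+2 -> 'I_m.+2}) : {ffun 'I_m -> 'I_m} :=
  ffun_of m (remove_arc u (natf f)).

Section InsertRemoveFfun.
Variable m : nat.
Implicit Type g : {ffun 'I_m -> 'I_m}.

Section Insert.
Variables (u v : nat) (g : {ffun 'I_m -> 'I_m}).
Hypotheses (ltuv : u < v) (ltvm : v < m.+2) (hg : is_fpf_inv g).

Let hG : fpf_involution m.+2 (insert_arc u v (natf g)).
Proof. exact/insert_arc_fpf/is_fpf_invP. Qed.

Lemma natf_insert_arcf y : y < m.+2 -> natf (insert_arcf u v g) y = insert_arc u v (natf g) y.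
Proof. exact: natf_ffun_of. Qed.

Lemma insert_arcf_fpf : is_fpf_inv (insert_arcf u v g).
Proof. exact: is_fpf_inv_ffun_of. Qed.

End Insert.

Section Remove.
Variables (u : nat) (f : {ffun 'I_m.+2 -> 'I_m.+2}).
Hypotheses (ltum : u < m.+2) (ltuf : u < natf f u) (hf : is_fpf_inv f).

Let hF : fpf_involution m (remove_arc u (natf f)).
Proof. exact/remove_arc_fpf/is_fpf_invP. Qed.

Lemma natf_remove_arcf x : x < m -> natf (remove_arcf u f) x = remove_arc u (natf f) x.
Proof. exact: natf_ffun_of. Qed.

Lemma remove_arcf_fpf : is_fpf_inv (remove_arcf u f).
Proof. exact: is_fpf_inv_ffun_of. Qed.

Lemma remove_arcfK : insert_arcf u (natf f u) (remove_arcf u f) = f.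
Proof.
have ltfm : natf f u < m.+2 by rewrite natf_lt.
apply: natf_inj => y ltym; rewrite natf_insert_arcf ?remove_arcf_fpf //.
rewrite (insert_arc_eq ltuf ltfm natf_remove_arcf) //.
by rewrite (remove_arcK ltum) //; apply/is_fpf_invP.
Qed.

End Remove.

Lemma insert_arcfK u v g : u < v -> v < m.+2 -> is_fpf_inv g ->
  remove_arcf u (insert_arcf u v g) = g.
Proof.
move=> ltuv ltvm hg; have ltum : u < m.+2 by lia.
have eG y : y < m.+2 -> natf (insert_arcf u v g) y = insert_arc u v (natf g) y.
  exact: natf_insert_arcf.
have Gu : natf (insert_arcf u v g) u = v by rewrite eG ?insert_arc_l.
apply: natf_inj => x ltxm.
rewrite natf_remove_arcf ?insert_arcf_fpf ?Gu //.
by rewrite (remove_arc_eq ltum _ _ eG) ?Gu // insert_arcK.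
Qed.

Section InsertParallelFfun.
Variables (g : {ffun 'I_m -> 'I_m}) (a : nat).
Hypotheses (hg : is_fpf_inv g) (ltam : a < m) (ltag : a < natf g a).

Let eG y : y < m.+2 ->
  natf (insert_arcf a.+1 (natf g a).+1 g) y = insert_arc a.+1 (natf g a).+1 (natf g) y.
Proof. by apply: natf_insert_arcf => //; have := natf_lt g ltam; lia. Qed.

Lemma occ21_insert_arcf : occ21 m.+2 (natf (insert_arcf a.+1 (natf g a).+1 g)) a.
Proof. by rewrite (eq_occ21 _ eG) occ21_insert_parallel //; apply/is_fpf_invP. Qed.

Lemma nocc21_insert_arcf :
  nocc21 m.+2 (natf (insert_arcf a.+1 (natf g a).+1 g)) = (nocc21 m (natf g)).+1.
Proof. by rewrite (eq_nocc21 eG) nocc21_insert_parallel //; apply/is_fpf_invP. Qed.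

End InsertParallelFfun.
End InsertRemoveFfun.

Lemma double_card_openers m (g : {ffun 'I_m -> 'I_m}) : is_fpf_inv g ->
  (\sum_(i < m) (i < natf g i)).*2 = m.
Proof.
move=> /forallP hg; have gK : involutive g by move=> i; have /andP[/eqP] := hg i.
have closers : \sum_(i < m) (i < natf g i) = \sum_(i < m) (g i < i).
  by rewrite (reindex_inj (inv_inj gK)); apply: eq_bigr => i _; rewrite !natfE gK.
rewrite -addnn {2}closers -big_split -[RHS]card_ord -sum1_card; apply: eq_bigr => i _.
have /andP[_ negi] := hg i; rewrite natfE.
by case: ltngtP => // egi; move: negi; rewrite -(inj_eq val_inj) /= egi eqxx.
Qed.

Definition fpf_invs m := [set f : {ffun 'I_m -> 'I_m} | is_fpf_inv f].
Definition fpf_invs_occ m t :=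
  [set f : {ffun 'I_m -> 'I_m} | is_fpf_inv f && (nocc21 m (natf f) == t)].

Lemma card_fpf_invs_rec m : #|fpf_invs m.+2| = m.+1 * #|fpf_invs m|.
Proof.
rewrite -[in RHS](card_ord m.+1) -cardsT -cardsX.
apply: (card_in_bij
  (f := fun f : {ffun 'I_m.+2 -> 'I_m.+2} => (inord (natf f 0).-1 : 'I_m.+1, remove_arcf 0 f))
  (g := fun p : 'I_m.+1 * {ffun 'I_m -> 'I_m} => insert_arcf 0 p.1.+1 p.2)).
- move=> f; rewrite !inE /= => hf.
  have [_ _ nef0] := is_fpf_invP _ hf 0 isT.
  by rewrite remove_arcf_fpf // lt0n.
- move=> [j g]; rewrite !inE /= => hg.
  by rewrite insert_arcf_fpf //= ltnS.
- move=> f; rewrite inE => hf /=.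
  have [ltf0 _ nef0] := is_fpf_invP _ hf 0 isT.
  by rewrite inordK ?prednK ?remove_arcfK ?lt0n //; lia.
- move=> [j g]; rewrite !inE /= => hg.
  have ltjm : j.+1 < m.+2 by rewrite ltnS.
  by rewrite insert_arcfK // natf_insert_arcf ?insert_arc_l //= inord_val.
Qed.

Lemma nocc21_le k F : nocc21 k F <= k.
Proof.
rewrite -[X in _ <= X]card_ord -sum1_card.
by apply: leq_sum => i _; case: (occ21 _ _ _).
Qed.

Lemma card_fpf_invs_sum m : #|fpf_invs m| = \sum_(t < m.+1) #|fpf_invs_occ m t|.
Proof.
rewrite -sum1_card (partition_big
  (fun f : {ffun 'I_m -> 'I_m} => inord (nocc21 m (natf f)) : 'I_m.+1) xpredT) //=.
apply: eq_bigr => t _; rewrite -sum1_card; apply: eq_bigl => f.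
by rewrite !inE -(inj_eq val_inj) /= inordK ?ltnS ?nocc21_le.
Qed.

Lemma remove_arcf_occ21 m (f : {ffun 'I_m.+2 -> 'I_m.+2}) i :
  is_fpf_inv f -> occ21 m.+2 (natf f) i ->
  let g := remove_arcf i.+1 f in
  [/\ i < m, is_fpf_inv g, i < natf g i & insert_arcf i.+1 (natf g i).+1 g = f].
Proof.
move=> hf /and3P[lti1m lti1f /eqP efi] g; have := natf_lt f lti1m => ltfm.
have ltim : i < m by lia.
have eg : natf g i = (natf f i.+1).-1.
  by rewrite natf_remove_arcf // /remove_arc bump2_small // efi; bump2_arith.
split=> //; first exact: remove_arcf_fpf.
  by rewrite eg; lia.
by rewrite eg prednK ?remove_arcfK //; lia.
Qed.

Lemma natf_opener m (g : {ffun 'I_m -> 'I_m}) a : a < natf g a -> a < m.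
Proof. by apply: contraLR; rewrite -!leqNgt => lema; rewrite natf_out. Qed.

Section OccurrenceRecursion.
Variables m t : nat.

(* Marks live in 'I_m.+2 on both sides, so that the bijection keeps them;
   the openers of an involution on m points are anyway below m. *)
Let marked_occs := [set p : {ffun 'I_m.+2 -> 'I_m.+2} * 'I_m.+2 |
  (p.1 \in fpf_invs_occ m.+2 t.+1) && occ21 m.+2 (natf p.1) p.2].
Let marked_openers := [set p : {ffun 'I_m -> 'I_m} * 'I_m.+2 |
  (p.1 \in fpf_invs_occ m t) && (p.2 < natf p.1 p.2)].

Let card_marked_occs : #|marked_occs| = t.+1 * #|fpf_invs_occ m.+2 t.+1|.
Proof.
rewrite (card_set_pairs (fun f => f \in fpf_invs_occ m.+2 t.+1)
                        (fun f (i : 'I_m.+2) => occ21 m.+2 (natf f) i)).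
rewrite (eq_bigr (fun _ => t.+1)) => [|f]; first by rewrite sum_nat_const mulnC.
by rewrite inE => /andP[_ /eqP <-]; rewrite card_set_ord.
Qed.

Let card_marked_openers : #|marked_openers|.*2 = #|fpf_invs_occ m t| * m.
Proof.
rewrite (card_set_pairs (fun g => g \in fpf_invs_occ m t) (fun g (a : 'I_m.+2) => a < natf g a)).
rewrite -muln2 big_distrl (eq_bigr (fun _ => m)) => [|g]; first by rewrite sum_nat_const.
rewrite inE => /andP[hg _]; rewrite (card_set_ord _ (fun a => a < natf g a)) /= muln2.
by rewrite -[RHS](double_card_openers hg) !big_ord_recr /= !natf_out ?ltnn ?addn0.
Qed.

Let card_marked_occs_openers : #|marked_occs| = #|marked_openers|.
Proof.
apply: (card_in_bij
  (f := fun p : {ffun 'I_m.+2 -> 'I_m.+2} * 'I_m.+2 => (remove_arcf p.2.+1 p.1, p.2))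
  (g := fun q : {ffun 'I_m -> 'I_m} * 'I_m.+2 => (insert_arcf q.2.+1 (natf q.1 q.2).+1 q.1, q.2))).
- move=> [f i]; rewrite !inE /= => /andP[/andP[hf /eqP nf] hi].
  have [ltim hg ltig ef] := remove_arcf_occ21 hf hi.
  have := nocc21_insert_arcf hg ltim ltig; rewrite ef nf => -[<-].
  by rewrite hg eqxx ltig.
- move=> [g a]; rewrite !inE /= => /andP[/andP[hg /eqP ng] ltag].
  have ltam := natf_opener ltag.
  have ltgm : (natf g a).+1 < m.+2 by have := natf_lt g ltam; lia.
  by rewrite insert_arcf_fpf ?occ21_insert_arcf ?nocc21_insert_arcf ?ng ?eqxx ?ltnS.
- move=> [f i]; rewrite !inE /= => /andP[/andP[hf _] hi].
  by have [_ _ _ ->] := remove_arcf_occ21 hf hi.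
- move=> [g a]; rewrite !inE /= => /andP[/andP[hg _] ltag].
  by rewrite insert_arcfK //; have := natf_lt g (natf_opener ltag); lia.
Qed.

Lemma card_fpf_invs_occ_rec : (t.+1 * #|fpf_invs_occ m.+2 t.+1|).*2 = #|fpf_invs_occ m t| * m.
Proof. by rewrite -card_marked_occs card_marked_occs_openers card_marked_openers. Qed.

End OccurrenceRecursion.

Lemma card_fpf_invs_occ_step n t :
  t.+1 * #|fpf_invs_occ (2 * n.+1) t.+1| = n * #|fpf_invs_occ (2 * n) t|.
Proof.
by have := card_fpf_invs_occ_rec (2 * n) t; rewrite (_ : (2 * n).+2 = 2 * n.+1); lia.
Qed.

Lemma card_fpf_invs_occ n t :
  #|fpf_invs_occ (2 * n.+1) t| = 'C(n, t) * #|fpf_invs_occ (2 * (n.+1 - t)) 0|.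
Proof.
elim: n t => [|n IH] [|t]; rewrite ?bin0 ?mul1n ?subn0 //.
  have := card_fpf_invs_occ_step 0 t; rewrite mul0n => /eqP.
  by rewrite muln_eq0 /= => /eqP ->.
apply/eqP; rewrite -(eqn_pmul2l (ltn0Sn t)) card_fpf_invs_occ_step IH subSS.
by rewrite mulnA (mul_bin_diag n.+1 t) mulnA.
Qed.

Lemma card_fpf_invs0 : #|fpf_invs 0| = 1.
Proof.
have -> : 1 = #|{ffun 'I_0 -> 'I_0}| by rewrite card_ffun card_ord.
by apply: eq_card => f; rewrite inE; apply/forallP => -[].
Qed.

Lemma card_fpf_invs_dfact n : #|fpf_invs (2 * n.+1)| = dfact (2 * n + 1).
Proof.
elim: n => [|n IH]; first by rewrite card_fpf_invs_rec card_fpf_invs0.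
rewrite (_ : 2 * n.+2 = (2 * n.+1).+2) ?card_fpf_invs_rec ?IH; last lia.
by rewrite (_ : 2 * n.+1 + 1 = (2 * n + 1).+2) /=; lia.
Qed.

Lemma dfact_binomial_sum k :
  dfact (2 * k + 1) = \sum_(j < k.+1) 'C(k, j) * #|fpf_invs_occ (2 * j.+1) 0|.
Proof.
pose G t := 'C(k, t) * #|fpf_invs_occ (2 * (k.+1 - t)) 0|.
rewrite -card_fpf_invs_dfact card_fpf_invs_sum (eq_bigr (G \o val)) => [|t _]; last first.
  exact: card_fpf_invs_occ.
rewrite [RHS](reindex_inj rev_ord_inj) [RHS](eq_bigr (G \o val)) => [|j _]; last first.
  by rewrite /= /G subSS bin_sub ?subSn // -ltnS.
rewrite [RHS](big_ord_widen _ G (_ : k.+1 <= (2 * k.+1).+1)); last lia.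
by rewrite [RHS]big_mkcond; apply: eq_bigr => t _; case: ltnP => // lekt; rewrite /= /G bin_small.
Qed.

Lemma nocc21_neq0 m F : (nocc21 m F != 0) = [exists i : 'I_m, occ21 m F i].
Proof.
rewrite /nocc21 sum_nat_eq0 negb_forall; apply: eq_existsb => i.
by rewrite eqb0 negbK.
Qed.

Section Matchings.
Variable n : nat.
Implicit Types (M : {set Defs.arc n}) (f : {ffun 'I_(2 * n) -> 'I_(2 * n)}).

Definition partner M : {ffun 'I_(2 * n) -> 'I_(2 * n)} :=
  [ffun k => if [pick e in M | (e.1 == k) || (e.2 == k)] is Some e
             then if e.1 == k then e.2 else e.1 else k].

Definition arcs_of f : {set Defs.arc n} := [set e | (val e.1 < val e.2) && (f e.1 == e.2)].

Lemma matchingP M : is_matching M ->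
  (forall e, e \in M -> val e.1 < val e.2) /\
  (forall k, exists e0, [set e in M | (e.1 == k) || (e.2 == k)] = [set e0]).
Proof.
case/andP => /forallP ltM /forallP oneM; split; first by move=> e; apply/implyP.
by move=> k; apply/cards1P; exact: oneM.
Qed.

Lemma partnerE M k e : is_matching M -> e \in M -> (e.1 == k) || (e.2 == k) ->
  partner M k = if e.1 == k then e.2 else e.1.
Proof.
move=> /matchingP[_ oneM] eM ek; have [e0 Mk] := oneM k.
have e0_uniq e' : e' \in M -> (e'.1 == k) || (e'.2 == k) -> e' = e0.
  by move=> e'M e'k; apply/set1P; rewrite -Mk inE e'M.
rewrite /partner ffunE; case: pickP => [e' /andP[e'M e'k] | noe].
  by rewrite (e0_uniq _ e'M e'k) (e0_uniq _ eM ek).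
by move: (noe e); rewrite eM ek.
Qed.

Lemma partner_arc M e : is_matching M -> e \in M -> partner M e.1 = e.2 /\ partner M e.2 = e.1.
Proof.
move=> hM eM; have [ltM _] := matchingP hM.
have ne12 : e.1 != e.2 by rewrite -(inj_eq val_inj) neq_ltn ltM.
by rewrite !(partnerE hM eM) ?eqxx ?orbT // (negbTE ne12).
Qed.

Lemma partner_fpf M : is_matching M -> is_fpf_inv (partner M).
Proof.
move=> hM; have [ltM oneM] := matchingP hM; apply/forallP => k.
have [e Mk] := oneM k.
have /setIdP[eM ek] : e \in [set e in M | (e.1 == k) || (e.2 == k)] by rewrite Mk set11.
have [p1 p2] := partner_arc hM eM.
have ne12 : e.1 != e.2 by rewrite -(inj_eq val_inj) neq_ltn ltM.
by case/orP: ek => /eqP <-; rewrite ?p1 ?p2 ?p1 eqxx // eq_sym.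
Qed.

Lemma partnerK M : is_matching M -> arcs_of (partner M) = M.
Proof.
move=> hM; have [ltM oneM] := matchingP hM.
apply/setP => e; rewrite inE; apply/andP/idP => [[lte /eqP pe]|eM]; last first.
  by have [-> _] := partner_arc hM eM; rewrite ltM.
have [e0 Mk] := oneM e.1.
have /setIdP[e0M e0k] : e0 \in [set e' in M | (e'.1 == e.1) || (e'.2 == e.1)].
  by rewrite Mk set11.
move: pe; rewrite (partnerE hM e0M e0k); case: eqP e0k => [e01 _ e02|_ /= /eqP e01 e02].
  by rewrite (surjective_pairing e) -e01 -e02 -surjective_pairing.
by have := ltM _ e0M; rewrite e01 e02 ltnNge ltnW.
Qed.

Lemma arcs_of_matching f : is_fpf_inv f -> is_matching (arcs_of f).
Proof.
move=> /forallP hf; apply/andP; split.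
  by apply/forallP => e; apply/implyP; rewrite inE => /andP[].
apply/forallP => k; apply/cards1P.
have /andP[/eqP ffk nefk] := hf k.
exists (if val k < val (f k) then (k, f k) else (f k, k)).
apply/setP => -[x y]; rewrite !inE /=; apply/idP/eqP.
  case/andP=> /andP[ltxy /eqP fxy] /orP[]/eqP exk; first by rewrite -exk fxy ltxy.
  have fyx : f y = x by rewrite -fxy; have /andP[/eqP] := hf x.
  by rewrite -exk fyx ltnNge (ltnW ltxy).
case: ifP => ltk [-> ->]; rewrite ?ffk ?ltk !eqxx ?orbT //=.
by rewrite ltn_neqAle leqNgt ltk (inj_eq val_inj) nefk.
Qed.

Lemma arcs_ofK f : is_fpf_inv f -> partner (arcs_of f) = f.
Proof.
move=> hf; have /forallP hf' := hf; apply/ffunP => k.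
have /andP[/eqP ffk nefk] := hf' k.
have hM := arcs_of_matching hf.
have [ltk|ltfk|ekf] := ltngtP (val k) (val (f k)).
- have kM : (k, f k) \in arcs_of f by rewrite inE /= ltk eqxx.
  by have [] := partner_arc hM kM.
- have kM : (f k, k) \in arcs_of f by rewrite inE /= ltfk ffk eqxx.
  by have [] := partner_arc hM kM.
- by move: nefk; rewrite -(inj_eq val_inj) ekf eqxx.
Qed.

Lemma has_endhered21_arcs_of f :
  has_endhered21 (arcs_of f) = (nocc21 (2 * n) (natf f) != 0).
Proof.
rewrite nocc21_neq0; apply/existsP/existsP => [[x /andP[]]|[i /and3P[lti1 lti1f /eqP efi]]].
  rewrite inE => /andP[ltx /eqP fx] /existsP[y /andP[]].
  rewrite inE => /andP[lty /eqP fy] /andP[/eqP y1 /eqP x2].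
  exists x.1; rewrite /occ21 /= in y1 x2 *.
  by rewrite -y1 !natfE fx fy x2 ltn_ord lty eqxx.
pose j := Ordinal lti1.
have fi : f i = (f j).+1 :> nat by rewrite -!natfE.
have ltj : j < f j by rewrite -natfE.
exists (i, f i); rewrite inE /= fi ltnS (ltnW (ltnW ltj)) eqxx /=.
by apply/existsP; exists (j, f j); rewrite inE /= ltj !eqxx.
Qed.

End Matchings.

Lemma a0_card_fpf_invs_occ n : a0 n = #|fpf_invs_occ (2 * n) 0|.
Proof.
apply: (card_in_bij (f := @partner n) (g := @arcs_of n)) => [M|f|M|f]; rewrite !inE.
- case/andP=> hM; rewrite -{1}(partnerK hM) has_endhered21_arcs_of negbK.
  by rewrite partner_fpf.
- by case/andP=> hf n0; rewrite arcs_of_matching // has_endhered21_arcs_of n0.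
- by case/andP=> hM _; apply: partnerK.
- by case/andP=> hf _; apply: arcs_ofK.
Qed.

Lemma bin_mul_bin n k j : j <= k -> k <= n ->
  'C(n, k) * 'C(k, j) = 'C(n, j) * 'C(n - j, k - j).
Proof.
move=> lejk lekn.
have facts_gt0 : 0 < j`! * (k - j)`! * (n - k)`! by rewrite !muln_gt0 !fact_gt0.
apply/eqP; rewrite -(eqn_pmul2r facts_gt0); apply/eqP.
have Ckj := bin_fact lejk; have Cnk := bin_fact lekn.
have Cnj := bin_fact (leq_trans lejk lekn).
have Cnjkj := bin_fact (leq_sub2r j lekn).
rewrite (_ : n - j - (k - j) = n - k) in Cnjkj; last lia.
transitivity n`!; first by rewrite -Cnk -Ckj; ring.
by rewrite -Cnj -Cnjkj; ring.
Qed.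

Import GRing.Theory.
Local Open Scope ring_scope.

Lemma sum_alternating_bin (R : pzRingType) m :
  \sum_(i < m.+1) (-1) ^+ (m - i) * 'C(m, i)%:R = (m == 0)%:R :> R.
Proof.
rewrite -expr0n -[X in _ = X ^+ _](addNr (1 : R)) (exprDn_comm _ (commr1 _)).
by apply: eq_bigr => i _; rewrite expr1n mulr1 mulr_natr.
Qed.

Lemma sum_alternating_bin_mul_bin (R : pzRingType) n j : (j <= n)%N ->
  \sum_(k < n.+1) (-1) ^+ (n - k) * 'C(n, k)%:R * 'C(k, j)%:R = (j == n)%:R :> R.
Proof.
move=> lejn.
rewrite -(big_mkord xpredT (fun k => (-1) ^+ (n - k) * 'C(n, k)%:R * 'C(k, j)%:R)).
rewrite (big_cat_nat (leq0n j) (leqW lejn)) /= big1_seq ?add0r => [|k]; last first.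
  by rewrite mem_index_iota /= => ltkj; rewrite (bin_small ltkj) mulr0.
rewrite -{1}(add0n j) big_addn subSn // big_mkord.
rewrite (eq_bigr (fun i : 'I_(n - j).+1 =>
  'C(n, j)%:R * ((-1) ^+ (n - j - i) * 'C(n - j, i)%:R))) => [|i _]; last first.
  have leijn : (i + j <= n)%N by have := ltn_ord i; lia.
  rewrite -mulrA -natrM bin_mul_bin ?leq_addl // natrM addnK.
  by rewrite mulrA (commr_nat _ 'C(n, j)) -mulrA addnC subnDA.
rewrite -big_distrr /= sum_alternating_bin -natrM.
have [->|nejn] := eqVneq j n; first by rewrite subnn binn eqxx.
by rewrite subn_eq0 leqNgt ltn_neqAle nejn lejn /= muln0.
Qed.

Lemma binomial_inversion (R : pzRingType) (b : nat -> R) n :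
  \sum_(k < n.+1) (-1) ^+ (n - k) * 'C(n, k)%:R * (\sum_(j < k.+1) 'C(k, j)%:R * b j) = b n.
Proof.
have widen k : (k <= n)%N ->
    \sum_(j < k.+1) 'C(k, j)%:R * b j = \sum_(j < n.+1) 'C(k, j)%:R * b j.
  move=> lekn; rewrite (big_ord_widen _ (fun j => 'C(k, j)%:R * b j) (_ : k.+1 <= n.+1)%N) //.
  rewrite big_mkcond; apply: eq_bigr => j _.
  by case: ltnP => // ltkj; rewrite (bin_small ltkj) mul0r.
rewrite (eq_bigr (fun k : 'I_n.+1 => \sum_(j < n.+1)
  (-1) ^+ (n - k) * 'C(n, k)%:R * 'C(k, j)%:R * b j)) => [|k _]; last first.
  by rewrite (widen k (ltn_ord k)) big_distrr /=; apply: eq_bigr => j _; rewrite mulrA.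
rewrite exchange_big /= (eq_bigr (fun j : 'I_n.+1 => (j == n :> nat)%:R * b j)) => [|j _].
  by rewrite big_ord_recr /= eqxx mul1r big1 ?add0r // => j _; rewrite ltn_eqF ?mul0r.
by rewrite -big_distrl /= sum_alternating_bin_mul_bin // -ltnS.
Qed.

Theorem lemma3 (n : nat) :
  (a0 n.+1)%:Z =
  \sum_(k < n.+1) (-1) ^+ (n - k) * ('C(n, k))%:Z * (dfact (2 * k + 1))%:Z.
Proof.
rewrite -[LHS](binomial_inversion (fun j => (a0 j.+1)%:Z)).
apply: eq_bigr => k _; rewrite -!natz dfact_binomial_sum natr_sum.
congr (_ * _); apply: eq_bigr => j _.
by rewrite natrM a0_card_fpf_invs_occ !natz.
Qed.
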